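(* There is no SLCS formula $\varphi$ such that for every quasi-discrete neighbourhood model $\mathcal M$ with underlying space $(X,\mathcal N)$: $(X,\mathcal N)$ is $T_0$-separated if and only if $\mathcal M,x\models\varphi$ for every $x\in X$. (In particular, there exist a $T_0$-separated and a non-$T_0$-separated quasi-discrete model with a path preserving bisimulation between them relating every point of each model to some point of the other.)
   Context: A neighbourhood space $(X,\mathcal N)$ assigns to each $x\in X$ a filter $\mathcal N(x)$ on $X$ (closed under finite intersections and supersets, not containing $\emptyset$) such that $x\in N$ for all $N\in\mathcal N(x)$. Closure: $\mathcal C(A)=\{x\mid\forall N\in\mathcal N(x): A\cap N\neq\emptyset\}$. Continuity: $f$ continuous iff $f^{-1}[N]\in\mathcal N_1(x)$ for all $N\in\mathcal N_2(f(x))$. The space is quasi-discrete if each $x$ has a minimal neighbourhood $N_{\min}(x)\in\mathcal N(x)$ contained in every element of $\mathcal N(x)$. A quasi-discrete neighbourhood model is $\mathcal M=((X,\mathcal N),\mathbb N,V)$ with $(X,\mathcal N)$ quasi-discrete, index space the natural numbers with order $\le$, least element $0$ and the quasi-discrete neighbourhood system with $N_{\min}(n)=\{n,n+1\}$, and valuation $V:X\to\mathcal P(\mathsf P)$ for a fixed countable set $\mathsf P$ of atoms. A path is a continuous map $p:\mathbb N\to X$. The space is $T_0$-separated if for all $x,y\in X$, $y\in\mathcal C(\{x\})$ and $x\in\mathcal C(\{y\})$ imply $x=y$. SLCS formulas: $\varphi::=a\mid\top\mid\neg\varphi\mid\varphi\wedge\varphi\mid\mathcal N\varphi\mid\varphi\,\mathcal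 R\,\varphi\mid\varphi\,\mathcal P\,\varphi$ with $a\in\mathsf P$. Semantics: $\mathcal M,x\models a$ iff $a\in V(x)$; Booleans as usual; $\mathcal M,x\models\mathcal N\varphi$ iff $x\in\mathcal C(\{y\mid\mathcal M,y\models\varphi\})$; $\mathcal M,x\models\varphi\,\mathcal R\,\psi$ iff there are a path $p$ and $n$ with $p(n)=x$, $\mathcal M,p(0)\models\psi$ and $\mathcal M,p(i)\models\varphi$ for all $0<i\le n$; $\mathcal M,x\models\varphi\,\mathcal P\,\psi$ iff there are a path $p$ with $p(0)=x$ and $n$ with $\mathcal M,p(n)\models\psi$ and $\mathcal M,p(i)\models\varphi$ for all $0\le i<n$. Path preserving bisimulation: for models $\mathcal M_1,\mathcal M_2$ over the same index space with path sets $\mathcal P_1,\mathcal P_2$, a triple $(Z_{\mathcal N},Z_1,Z_2)$, $\emptyset\ne Z_{\mathcal N}\subseteq X_1\times X_2$, $Z_1\subseteq(\mathcal P_1\times I)\times(\mathcal P_2\times I)$, $Z_2\subseteq(\mathcal P_2\times I)\times(\mathcal P_1\times I)$, such that: (1) at each pair $x_1Z_{\mathcal N}x_2$: $V_1(x_1)=V_2(x_2)$; for every $N_2\in\mathcal N_2(x_2)$ there is $N_1\in\mathcal N_1(x_1)$ with every $y_1\in N_1$ related to some $y_2\in N_2$; and symmetrically for every $N_1\in\mathcal N_1(x_1)$; (2) if $x_1Z_{\mathcal N}x_2$, $p(0)=x_1$, $n\ne0$, there are $q$ with $q(0)=x_2$ and $m$ with $p(n)Z_{\mathcal N}q(m)$,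 $(p,n)Z_1(q,m)$; (3) if $x_1Z_{\mathcal N}x_2$, $p(n)=x_1$, $n\ne0$, there are $q,m$ with $q(m)=x_2$, $p(0)Z_{\mathcal N}q(0)$, $(p,n)Z_1(q,m)$; (4) if $(p,n)Z_1(q,m)$ and $0<k_q<m$, there is $0<k_p<n$ with $p(k_p)Z_{\mathcal N}q(k_q)$; (5)–(7) the symmetric conditions with roles of the models swapped and $Z_2$ in place of $Z_1$ (i.e. (5) if $x_1Z_{\mathcal N}x_2$, $q(0)=x_2$, $m\ne0$, there are $p$ with $p(0)=x_1$ and $n$ with $p(n)Z_{\mathcal N}q(m)$, $(q,m)Z_2(p,n)$; (6) if $x_1Z_{\mathcal N}x_2$, $q(m)=x_2$, $m\neq0$, there are $p,n$ with $p(n)=x_1$, $p(0)Z_{\mathcal N}q(0)$, $(q,m)Z_2(p,n)$; (7) if $(q,m)Z_2(p,n)$ and $0<k_p<n$, there is $0<k_q<m$ with $p(k_p)Z_{\mathcal N}q(k_q)$). *)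

From Stdlib Require Import Arith.

Set Implicit Arguments.

Definition set (X : Type) := X -> Prop.

Definition is_nbhd_system (X : Type) (N : X -> set X -> Prop) : Prop :=
  forall x : X,
    N x (fun _ => True) /\
    (forall A B, N x A -> N x B -> N x (fun y => A y /\ B y)) /\
    (forall A B, N x A -> (forall y, A y -> B y) -> N x B) /\
    ~ N x (fun _ => False) /\
    (forall A, N x A -> A x).

Definition quasi_discrete (X : Type) (N : X -> set X -> Prop) : Prop :=
  forall x : X, exists Nmin : set X,
    N x Nmin /\ forall A, N x A -> forall y, Nmin y -> A y.

Definition closure (X : Type) (N : X -> set X -> Prop) (A : set X) : set X :=
  fun x => forall S, N x S -> exists y, S y /\ A y.

Definition continuous (X1 X2 : Type) (N1 : X1 -> set X1 -> Prop)
  (N2 : X2 -> set X2 -> Prop) (f : X1 -> X2) : Prop :=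
  forall x S, N2 (f x) S -> N1 x (fun y => S (f y)).

(* The index space: natural numbers, quasi-discrete with N_min(n) = {n, n+1}. *)
Definition natN (n : nat) (A : set nat) : Prop :=
  forall m, (m = n \/ m = S n) -> A m.

Definition T0 (X : Type) (N : X -> set X -> Prop) : Prop :=
  forall x y : X, closure N (fun z => z = x) y -> closure N (fun z => z = y) x -> x = y.

Record qd_model := QDModel {
  carrier : Type;
  nbhd : carrier -> set carrier -> Prop;
  nbhd_ok : is_nbhd_system nbhd;
  nbhd_qd : quasi_discrete nbhd;
  val : carrier -> set nat
}.

Definition is_path (M : qd_model) (p : nat -> carrier M) : Prop :=
  continuous natN (@nbhd M) p.

Inductive formula : Type :=
| FAtom : nat -> formula
| FTop : formula
| FNot : formula -> formula
| FAnd : formula -> formula -> formula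
| FNear : formula -> formula
| FReach : formula -> formula -> formula
| FProp : formula -> formula -> formula.

Fixpoint sat (M : qd_model) (f : formula) : set (carrier M) :=
  match f with
  | FAtom a => fun x => val M x a
  | FTop => fun _ => True
  | FNot g => fun x => ~ sat M g x
  | FAnd g h => fun x => sat M g x /\ sat M h x
  | FNear g => closure (@nbhd M) (sat M g)
  | FReach g h => fun x => exists (p : nat -> carrier M) (n : nat),
      is_path M p /\ p n = x /\ sat M h (p 0) /\
      (forall i, 0 < i <= n -> sat M g (p i))
  | FProp g h => fun x => exists (p : nat -> carrier M) (n : nat),
      is_path M p /\ p 0 = x /\ sat M h (p n) /\
      (forall i, i < n -> sat M g (p i))
  end.

From Stdlib Require Import Arith.

(* Proof idea.  SLCS cannot distinguish an indiscrete space with two points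
   from one with a single point.  In an indiscrete neighbourhood space (the
   only neighbourhood of a point is the whole carrier) every sequence is a
   path, and the closure of a set is everything as soon as the set is
   inhabited.  Hence a map between indiscrete models that preserves the
   valuation and has a right inverse preserves and reflects satisfaction of
   every formula (an instance of path preserving bisimulation, where the
   graph of the map is the bisimulation).  The collapse bool -> unit is such
   a map, with the empty valuation on both sides; the one-point model is T0
   while the two-point model is not, so no formula can characterise T0. *)

Definition indiscrete (X : Type) (x : X) (A : set X) : Prop := forall y, A y.

Lemma indiscrete_nbhd_system (X : Type) : is_nbhd_system (@indiscrete X).
Proof. intros x; unfold indiscrete; repeat split; firstorder. Qed.

Lemma indiscrete_quasi_discrete (X : Type) : quasi_discrete (@indiscrete X).
Proof. intros x; exists (fun _ => True); unfold indiscrete; firstorder. Qed.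

Definition indiscrete_model {X : Type} (v : X -> set nat) : qd_model :=
  QDModel (indiscrete_nbhd_system X) (indiscrete_quasi_discrete X) v.

Lemma indiscrete_path (X : Type) (v : X -> set nat) (p : nat -> X) :
  is_path (indiscrete_model v) p.
Proof. intros k S HS m _; apply HS. Qed.

Lemma indiscrete_closure (X : Type) (A : set X) (x : X) :
  closure (@indiscrete X) A x <-> exists y, A y.
Proof.
  split.
  - intros H; destruct (H (fun _ => True) (fun _ => I)) as [y [_ Ay]].
    now exists y.
  - intros [y Ay] S HS; exists y; split; [apply HS | exact Ay].
Qed.

Lemma indiscrete_T0 (X : Type) :
  T0 (@indiscrete X) <-> forall x y : X, x = y.
Proof.
  split.
  - intros H x y; apply H; apply indiscrete_closure; eauto.
  - intros H x y _ _; apply H.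
Qed.

Section IndiscreteInvariance.

Variables (X Y : Type) (vX : X -> set nat) (vY : Y -> set nat).
Variables (f : X -> Y) (g : Y -> X).
Hypothesis f_val : forall x, vX x = vY (f x).
Hypothesis f_g : forall y, f (g y) = y.

Let MX := indiscrete_model vX.
Let MY := indiscrete_model vY.

Definition lift_at (q : nat -> Y) (n : nat) (x : X) (i : nat) : X :=
  if Nat.eqb i n then x else g (q i).

Lemma lift_at_spec (q : nat -> Y) (n : nat) (x : X) :
  f x = q n -> forall i, f (lift_at q n x i) = q i.
Proof.
  intros Hx i; unfold lift_at.
  destruct (Nat.eqb_spec i n) as [-> | _]; [exact Hx | apply f_g].
Qed.

(* Satisfaction is preserved and reflected along f: paths are pushed forward
   by composing with f and pulled back with lift_at. *)
Lemma sat_indiscrete_map :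
  forall phi x, sat MX phi x <-> sat MY phi (f x).
Proof.
  induction phi as [a | | phi IH | phi1 IH1 phi2 IH2 | phi IH
                   | phi1 IH1 phi2 IH2 | phi1 IH1 phi2 IH2]; intros x; simpl.
  - now rewrite f_val.
  - tauto.
  - rewrite IH; tauto.
  - rewrite IH1, IH2; tauto.
  - rewrite !indiscrete_closure; split.
    + intros [y Hy]; exists (f y); now apply IH.
    + intros [y Hy]; exists (g y); apply IH; now rewrite f_g.
  - split.
    + intros (p & n & _ & Hn & H0 & Hi); exists (fun i => f (p i)), n.
      split; [apply indiscrete_path |]; split; [now rewrite Hn |]; split; [now apply IH2 |].
      intros i Hi'; apply IH1, Hi, Hi'.
    + intros (q & n & _ & Hn & H0 & Hi).
      pose proof (lift_at_spec q n x (eq_sym Hn)) as Hlift.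
      exists (lift_at q n x), n.
      split; [apply indiscrete_path |]; split; [unfold lift_at; now rewrite Nat.eqb_refl |]; split.
      * apply IH2; now rewrite Hlift.
      * intros i Hi'; apply IH1; rewrite Hlift; apply Hi, Hi'.
  - split.
    + intros (p & n & _ & H0 & Hn & Hi); exists (fun i => f (p i)), n.
      split; [apply indiscrete_path |]; split; [now rewrite H0 |]; split; [now apply IH2 |].
      intros i Hi'; apply IH1, Hi, Hi'.
    + intros (q & n & _ & H0 & Hn & Hi).
      pose proof (lift_at_spec q 0 x (eq_sym H0)) as Hlift.
      exists (lift_at q 0 x), n.
      split; [apply indiscrete_path |]; split; [reflexivity |]; split.
      * apply IH2; now rewrite Hlift.
      * intros i Hi'; apply IH1; rewrite Hlift; apply Hi, Hi'.
Qed.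

End IndiscreteInvariance.

Theorem proposition19 :
  ~ exists phi : formula,
      forall M : qd_model,
        (T0 (@nbhd M) <-> forall x : carrier M, sat M phi x).
Proof.
  intros [phi Hphi].
  set (empty := fun (_ : nat) => False).
  set (M1 := indiscrete_model (fun _ : unit => empty)).
  set (M2 := indiscrete_model (fun _ : bool => empty)).
  assert (sat1 : forall x, sat M1 phi x).
  { apply Hphi, indiscrete_T0; now intros [] []. }
  (* By invariance under the collapse bool -> unit, phi holds in M2 too. *)
  assert (T0_2 : T0 (@nbhd M2)).
  { apply Hphi; intros x.
    apply (@sat_indiscrete_map bool unit (fun _ => empty) (fun _ => empty)
             (fun _ => tt) (fun _ => true)); [reflexivity | now intros [] | apply sat1]. }
  discriminate (proj1 (indiscrete_T0 bool) T0_2 true false).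
Qed.
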